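(* Let $(X,d)$ be a separable metric space and let $\mu$ be a finite nonatomic Radon measure on $X$ giving positive measure to each nonempty open set. Let $T$ be an invertible measure-preserving transformation of $(X,\mu)$ that is rigid. Then for every $\epsilon>0$ there exist a measurable set $B\subset X$ with $\mu(B)<\epsilon$ and a sequence of natural numbers $m_j\to\infty$ such that $\sup_{x\in X\setminus B} d(x,T^{m_j}x)\to 0$ as $j\to\infty$; that is, $T$ is uniformly rigid on $X\setminus B$.
   Context: $T$ is rigid if there is a sequence of natural numbers $n_k\to\infty$ such that $\mu(A\triangle T^{n_k}A)\to 0$ for every measurable $A$ of finite measure. For $Y\subset X$, $T$ is uniformly rigid on $Y$ if there is a sequence $m_j\to\infty$ with $d(y,T^{m_j}y)\to0$ uniformly in $y\in Y$. *)

From HB Require Import structures.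
From mathcomp Require Import all_boot all_order all_algebra.
From mathcomp Require Import all_classical all_reals all_analysis.
Set Implicit Arguments. Unset Strict Implicit. Unset Printing Implicit Defensive.
Import Order.TTheory GRing.Theory Num.Theory.
Local Open Scope classical_set_scope.
Local Open Scope ring_scope.

Section defs.
Context {R : realType} {X : Type}.

Definition is_metric (d : X -> X -> R) : Prop :=
  (forall x y, 0 <= d x y) /\ (forall x y, d x y = 0 <-> x = y) /\
  (forall x y, d x y = d y x) /\ (forall x y z, d x z <= d x y + d y z).

Definition dball (d : X -> X -> R) (x : X) (r : R) : set X := [set y | d x y < r].

Definition d_open (d : X -> X -> R) (U : set X) : Prop :=
  forall x, U x -> exists2 r : R, 0 < r & dball d x r `<=` U.

Definition d_compact (d : X -> X -> R) (K : set X) : Prop :=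
  forall (I : Type) (U : I -> set X), (forall i, d_open d (U i)) ->
    K `<=` \bigcup_i U i ->
    exists2 F : set I, finite_set F & K `<=` \bigcup_(i in F) U i.

Definition d_separable (d : X -> X -> R) : Prop :=
  exists D : set X, countable D /\
    forall x (r : R), 0 < r -> exists2 y, D y & d x y < r.

Definition symdiff (A B : set X) : set X := (A `\` B) `|` (B `\` A).

Definition nat_to_infty (n : nat -> nat) : Prop :=
  forall N, exists K, forall k, (K <= k)%N -> (N <= n k)%N.
End defs.

Section measure_defs.
Context {R : realType} {dsp : measure_display} {X : measurableType dsp}.

Definition borel_of (d : X -> X -> R) : Prop :=
  @measurable dsp X = <<s d_open d >>.

Definition nonatomic (mu : set X -> \bar R) : Prop :=
  forall A, measurable A -> (0 < mu A)%E ->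
    exists B, [/\ measurable B, B `<=` A, (0 < mu B)%E & (mu B < mu A)%E].

Definition radon (d : X -> X -> R) (mu : set X -> \bar R) : Prop :=
  (forall x, exists2 r : R, 0 < r & (mu (dball d x r) < +oo)%E) /\
  (forall A, measurable A ->
     mu A = ereal_sup [set mu K | K in [set K | d_compact d K /\ K `<=` A]]).

Definition invertible_mp (mu : set X -> \bar R) (T : X -> X) : Prop :=
  exists Tinv : X -> X, [/\ cancel T Tinv, cancel Tinv T,
    measurable_fun setT T, measurable_fun setT Tinv &
    forall A, measurable A -> mu (T @^-1` A) = mu A].

Definition rigid (mu : set X -> \bar R) (T : X -> X) : Prop :=
  exists n : nat -> nat, nat_to_infty n /\
    forall A, measurable A -> (mu A < +oo)%E ->
      (fun k => mu (symdiff A (iter (n k) T @` A))) @ \oo --> 0%E.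

Definition uniformly_rigid_on (d : X -> X -> R) (T : X -> X) (Y : set X) : Prop :=
  exists m : nat -> nat, nat_to_infty m /\
    forall eta : R, 0 < eta -> exists J, forall j, (J <= j)%N ->
      forall y, Y y -> d y (iter (m j) T y) < eta.
End measure_defs.

From HB Require Import structures.
From mathcomp Require Import all_boot all_order all_algebra.
From mathcomp Require Import all_classical all_reals all_analysis.
Import Order.TTheory GRing.Theory Num.Theory.
Local Open Scope classical_set_scope.
Local Open Scope ring_scope.

(* Cover X by countably many open sets of diameter < delta (balls around a
   countable dense set) and keep finitely many of them, A_0, ..., A_(N-1), whose
   union misses a set of measure < eta/2.  Rigidity applied to each A_k makes the
   set of points of A_k that T^(n_j) sends out of A_k small for large j; outside
   the union of these exit sets every point y lies in some A_k together with
   T^(n_j) y, so d(y, T^(n_j) y) < delta.  Letting delta go to 0 and eta sum to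
   less than eps, a diagonal choice of the bad sets and times gives B. *)

Lemma cvge0_near_lt {R : realType} (u : nat -> \bar R) (eta : R) :
  u @ \oo --> 0%E -> 0 < eta -> \forall j \near \oo, (u j < eta%:E)%E.
Proof.
move=> u0 eta0; suff : nbhs 0%E [set y | (y < eta%:E)%E] by move/u0.
apply/(@nbhs_EFin R (fun y => (y < eta%:E)%E) 0).
by near=> x; rewrite lte_fin; near: x; exact: (cvgr_lt 0 cvg_id).
Unshelve. all: by end_near.
Qed.

Section finite_measure.
Context {R : realType} {dsp : measure_display} {X : measurableType dsp}.
Variable mu : {measure set X -> \bar R}.

Lemma measure_bigcup_ord_near_lt (S : nat -> nat -> set X) N (eta : R) :
  (forall k j, measurable (S k j)) ->
  (forall k e, 0 < e -> \forall j \near \oo, (mu (S k j) < e%:E)%E) -> 0 < eta ->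
  \forall j \near \oo, (mu (\bigcup_(k < N) S k j) < eta%:E)%E.
Proof.
move=> mS smallS; elim: N eta => [|N IH] eta eta0.
  by near=> j; rewrite bigcup_mkord big_ord0 measure0 lte_fin.
have eta20 : 0 < eta / 2 by rewrite divr_gt0.
apply: filterS2 (IH _ eta20) (smallS N _ eta20) => j h1 h2.
rewrite bigcup_mkord big_ord_recr /= -(bigcup_mkord N (fun k => S k j)).
have mU : measurable (\bigcup_(k < N) S k j).
  by rewrite bigcup_mkord; apply: bigsetU_measurable.
apply: le_lt_trans (measureU2 mu mU (mS N j)) _.
by rewrite [eta](splitr eta) EFinD lteD.
Unshelve. all: by end_near.
Qed.

Lemma measure_compl_bigcup_ord_lt (A : nat -> set X) (eta : R) :
  (mu setT < +oo)%E -> (forall k, measurable (A k)) -> (forall x, exists k, A k x) ->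
  0 < eta -> exists N, (mu (~` \bigcup_(k < N) A k) < eta%:E)%E.
Proof.
move=> fin mA cover eta0.
have mU N : measurable (\bigcup_(k < N) A k).
  by rewrite bigcup_mkord; apply: bigsetU_measurable.
have capU : \bigcap_N (~` \bigcup_(k < N) A k) = set0.
  apply/seteqP; split => // x /= h; have [k Akx] := cover x.
  by apply: (h k.+1 I); exists k => /=.
have Vcvg : mu \o (fun N => ~` \bigcup_(k < N) A k) @ \oo --> 0%E.
  rewrite -(measure0 mu) -capU; apply: nonincreasing_cvg_mu.
  - by rewrite bigcup_mkord big_ord0 setC0.
  - by move=> N; apply: measurableC.
  - by rewrite capU.
  - apply/nonincreasing_seqP => N; rewrite subsetEset; apply: subsetC.
    by move=> x [k /= kN Akx]; exists k => //=; rewrite ltnS ltnW.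
have [N _ HN] := cvge0_near_lt _ _ Vcvg eta0.
by exists N; exact: (HN N (leqnn N)).
Qed.

End finite_measure.

Section metric.
Context {R : realType} {X : Type} {d : X -> X -> R}.
Hypothesis dmetric : is_metric d.

Lemma d_open_dball x r : d_open d (dball d x r).
Proof.
have [_ [_ [_ dtri]]] := dmetric; move=> y; rewrite /dball /= => xy.
exists (r - d x y); first by rewrite subr_gt0.
by move=> z /=; rewrite ltrBrDl => yz; apply: le_lt_trans (dtri x y z) _.
Qed.

Lemma d_open_bigcup (I : Type) (P : set I) (F : I -> set X) :
  (forall i, d_open d (F i)) -> d_open d (\bigcup_(i in P) F i).
Proof.
move=> oF x [i Pi Fix]; have [r r0 sub] := oF i x Fix.
by exists r => // y /sub Fiy; exists i.
Qed.

Lemma separable_cover_small_open (delta : R) : d_separable d -> 0 < delta ->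
  exists A : nat -> set X, [/\ forall k, d_open d (A k), forall x, exists k, A k x &
    forall k x y, A k x -> A k y -> d x y < delta].
Proof.
have [_ [_ [dC dtri]]] := dmetric.
move=> [D [cD dense]] delta0; have [f injf] := countable_injP _ cD.
have delta20 : 0 < delta / 2 by rewrite divr_gt0.
exists (fun k => \bigcup_(c in [set c | D c /\ f c = k]) dball d c (delta / 2)); split.
- by move=> k; apply: d_open_bigcup => c; exact: d_open_dball.
- move=> x; have [c Dc xc] := dense x _ delta20.
  by exists (f c), c => //; rewrite /dball /= dC.
- move=> k x y [c [Dc fc] cx] [c' [Dc' fc'] c'y].
  have cc' : c = c' by apply: injf; rewrite ?inE // fc fc'.
  apply: le_lt_trans (dtri x c y) _; rewrite {2}cc'.
  by rewrite dC [delta](splitr delta) ltrD.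
Qed.

End metric.

Lemma measurable_iter_preimage {dsp : measure_display} {X : measurableType dsp}
  (g : X -> X) : measurable_fun setT g ->
  forall n A, measurable A -> measurable (iter n g @^-1` A).
Proof.
move=> mg; elim=> [|n IH] A mA //.
have : measurable (g @^-1` A) by rewrite -[_ @^-1` _]setTI; exact: mg.
exact: IH.
Qed.

Section invertible_measure_preserving.
Context {R : realType} {dsp : measure_display} {X : measurableType dsp}.
Variables (mu : {measure set X -> \bar R}) (T Tinv : X -> X).
Hypotheses (TK : cancel T Tinv) (TinvK : cancel Tinv T).
Hypotheses (mT : measurable_fun setT T) (mTinv : measurable_fun setT Tinv).
Hypothesis T_preserving : forall A, measurable A -> mu (T @^-1` A) = mu A.

Lemma measure_iter_preimage n A : measurable A -> mu (iter n T @^-1` A) = mu A.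
Proof.
elim: n A => [|n IH] A mA //=.
rewrite -(T_preserving _ mA) -(IH (T @^-1` A)) //.
by rewrite -[_ @^-1` _]setTI; exact: mT.
Qed.

Lemma iterK n : cancel (iter n T) (iter n Tinv).
Proof. by elim: n => [|n IH] x //; rewrite [iter n.+1 T x]iterS iterSr TK IH. Qed.

Lemma iterKinv n : cancel (iter n Tinv) (iter n T).
Proof. by elim: n => [|n IH] x //; rewrite [iter n.+1 Tinv x]iterS iterSr TinvK IH. Qed.

Lemma image_iter n A : iter n T @` A = iter n Tinv @^-1` A.
Proof.
apply/seteqP; split => [y [x Ax <-]|y Ay] /=; first by rewrite iterK.
by exists (iter n Tinv y) => //; rewrite iterKinv.
Qed.

Lemma measure_exit_le_symdiff n A : measurable A ->
  (mu (A `\` iter n T @^-1` A) <= mu (symdiff A (iter n T @` A)))%E.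
Proof.
move=> mA; have mTA : measurable (iter n T @` A).
  by rewrite image_iter; exact: measurable_iter_preimage.
have -> : A `\` iter n T @^-1` A = iter n T @^-1` (iter n T @` A `\` A).
  apply/seteqP; split => [x [Ax nTAx]|x [[y Ay /(can_inj (iterK n)) <-] nTAy]].
    by split => //; exists x.
  by split.
rewrite measure_iter_preimage; last exact: measurableD.
apply: le_measure; rewrite ?inE; [exact: measurableD| |by right].
by apply: measurableU; exact: measurableD.
Qed.

End invertible_measure_preserving.

Section rigid_to_uniform.
Context {R : realType} {dsp : measure_display} {X : measurableType dsp}.
Variables (d : X -> X -> R) (mu : {measure set X -> \bar R}) (T : X -> X).

Definition approx_uniformly_rigid : Prop :=
  forall (delta eta : R) (M : nat), 0 < delta -> 0 < eta ->
    exists C : set X, [/\ measurable C, (mu C < eta%:E)%E &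
      exists2 m, (M <= m)%N & forall y, ~ C y -> d y (iter m T y) < delta].

Lemma rigid_approx_uniformly_rigid : is_metric d -> d_separable d -> borel_of d ->
  (mu setT < +oo)%E -> invertible_mp mu T -> rigid mu T -> approx_uniformly_rigid.
Proof.
move=> dmetric sep borel fin [Tinv [TK TinvK mT mTinv T_pres]] [n [ninf rig]].
move=> delta eta M delta0 eta0.
have [A [oA coverA smallA]] := separable_cover_small_open dmetric _ sep delta0.
have mA k : measurable (A k) by rewrite borel; exact: sub_sigma_algebra.
have eta20 : 0 < eta / 2 by rewrite divr_gt0.
have [N HN] := measure_compl_bigcup_ord_lt mu A (eta / 2) fin mA coverA eta20.
pose E k j := A k `\` iter (n j) T @^-1` A k.
have mE k j : measurable (E k j).
  by apply: measurableD => //; exact: measurable_iter_preimage.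
have smallE k e : 0 < e -> \forall j \near \oo, (mu (E k j) < e%:E)%E.
  move=> e0; have muA : (mu (A k) < +oo)%E.
    by apply: le_lt_trans fin; apply: le_measure; rewrite ?inE.
  apply: filterS (cvge0_near_lt _ _ (rig _ (mA k) muA) e0) => j.
  apply: le_lt_trans; exact: measure_exit_le_symdiff.
have [J _ HJ] := measure_bigcup_ord_near_lt mu E N (eta / 2) mE smallE eta20.
have [K HK] := ninf M; pose j := maxn J K.
have mEj : measurable (\bigcup_(k < N) E k j).
  by rewrite bigcup_mkord; apply: bigsetU_measurable.
have mAN : measurable (~` \bigcup_(k < N) A k).
  by apply: measurableC; rewrite bigcup_mkord; apply: bigsetU_measurable.
exists (~` (\bigcup_(k < N) A k) `|` \bigcup_(k < N) E k j); split.
- exact: measurableU.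
- apply: le_lt_trans (measureU2 mu mAN mEj) _.
  by rewrite [eta](splitr eta) EFinD lteD // HJ //= leq_maxl.
exists (n j); first by rewrite HK // leq_maxr.
move=> y Cy; have [k kN Aky] : (\bigcup_(k < N) A k) y.
  by apply: contrapT => ?; apply: Cy; left.
have AkTy : A k (iter (n j) T y).
  by apply: contrapT => ?; apply: Cy; right; exists k.
exact: smallA Aky AkTy.
Qed.

Lemma approx_uniformly_rigid_off_small_set : approx_uniformly_rigid ->
  forall eps : R, 0 < eps -> exists B : set X,
    [/\ measurable B, (mu B < eps%:E)%E & uniformly_rigid_on d T (~` B)].
Proof.
move=> approx eps eps0.
pose eta p : R := eps / 2 / (2 ^ p.+1)%:R.
have step p : exists Cm : set X * nat, [/\ measurable Cm.1, (mu Cm.1 < (eta p)%:E)%E,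
    (p <= Cm.2)%N & forall y, ~ Cm.1 y -> d y (iter Cm.2 T y) < p.+1%:R^-1].
  have [||C [mC muC [m pm hC]]] := approx p.+1%:R^-1 (eta p) p.
  - by rewrite invr_gt0.
  - by rewrite !divr_gt0.
  by exists (C, m).
have [g Hg] := choice step.
have mg p : measurable (g p).1 by have [] := Hg p.
exists (\bigcup_p (g p).1); split.
- exact: bigcupT_measurable.
- apply: (@le_lt_trans _ _ (\sum_(p <oo) mu (g p).1)%E).
    by apply: measure_sigma_subadditive => //; exact: bigcupT_measurable.
  apply: (@le_lt_trans _ _ (\sum_(p <oo) (eta p)%:E)%E).
    by apply: lee_nneseries => [p _ _|p _]; [exact: measure_ge0 | have [_ /ltW] := Hg p].
  apply: le_lt_trans (epsilon_trick0 xpredT _) _; first by rewrite divr_ge0 // ltW.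
  by rewrite lte_fin ltr_pdivrMr // ltr_pMr // ltr1n.
exists (fun p => (g p).2); split.
  by move=> N; exists N => k Nk; have [_ _ kg _] := Hg k; exact: leq_trans kg.
move=> delta delta0; exists (Num.Def.truncn delta^-1) => j Jj y By.
have [_ _ _ hy] := Hg j.
apply: lt_trans (hy y (fun h => By (ex_intro2 _ _ j I h))) _.
rewrite invf_plt ?posrE //; apply: lt_le_trans (truncnS_gt _) _.
by rewrite ler_nat.
Qed.

End rigid_to_uniform.

Theorem mainTheorem9 (R : realType) (dsp : measure_display) (X : measurableType dsp)
  (d : X -> X -> R) (mu : {measure set X -> \bar R}) (T : X -> X) :
  is_metric d -> d_separable d -> borel_of d ->
  (mu setT < +oo)%E -> nonatomic mu -> radon d mu ->
  (forall U, d_open d U -> U !=set0 -> (0 < mu U)%E) ->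
  invertible_mp mu T -> rigid mu T ->
  forall eps : R, 0 < eps ->
    exists B : set X, [/\ measurable B, (mu B < eps%:E)%E &
      uniformly_rigid_on d T (~` B)].
Proof.
move=> dmetric sep borel fin _ _ _ invT rigT.
apply: approx_uniformly_rigid_off_small_set.
exact: rigid_approx_uniformly_rigid.
Qed.
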